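(* Let $J\in\{1,\dots,N-1\}$ be the index with $\lambda_J\le\lambda_{\rm avg}<\lambda_{J+1}$. Let $K\in\{1,\dots,J\}$ and let $h$ be a graph filter with $h(\lambda_n)\ne 0$ for $n=1,\dots,K$, and define $$\eta_K=\frac{\max\{|h(\lambda_{K+1})|,\dots,|h(\lambda_N)|\}}{\min\{|h(\lambda_1)|,\dots,|h(\lambda_K)|\}} .$$ If $$\eta_K^2<\frac{\sum_{n=1}^K(\lambda_n-\lambda_{\rm avg})}{\sum_{n=1}^J(\lambda_n-\lambda_{\rm avg})},$$ then $h$ is a smooth graph filter, i.e. $r(h)<1$. (In particular, for $K=J$, every graph filter with $\eta_J<1$ is smooth.)
   Context: Let $\mathcal G$ be an undirected, weighted, connected graph on $N\ge 2$ nodes with symmetric weighted adjacency matrix $W\in\mathbb R^{N\times N}$, $W_{k,n}\ge 0$. Its Laplacian is $L=\mathrm{diag}(W\mathbf 1)-W$, with eigendecomposition $L=V\,\mathrm{diag}(\lambda_1,\dots,\lambda_N)\,V^T$, $V$ orthogonal, and eigenvalues ordered $0=\lambda_1\le\lambda_2\le\cdots\le\lambda_N$ (connectedness gives $\lambda_2>0$). Put $\lambda_{\rm avg}=\frac1N\sum_{n=1}^N\lambda_n$. A graph filter is a real function $h$ on the eigenvalues, satisfying $h(\lambda_m)=h(\lambda_k)$ whenever $\lambda_m=\lambda_k$, acting as the matrix $h(L)=V\,\mathrm{diag}(h(\lambda_1),\dots,h(\lambda_N))\,V^T$. For a graph filter with $h(\lambda_n)$ not all zero, its smoothness ratio is $r(h)=\lambda_{\rm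 avg}^{-1}\sum_n\lambda_n h^2(\lambda_n)/\sum_n h^2(\lambda_n)$, and $h$ is called a smooth graph filter if $r(h)<1$. A graph filter with $\eta_K<1$ is called a graph low-pass filter of order $K$. *)

From HB Require Import structures.
From mathcomp Require Import all_boot all_order all_algebra.
Set Implicit Arguments. Unset Strict Implicit. Unset Printing Implicit Defensive.
Import Order.TTheory GRing.Theory Num.Theory.
Local Open Scope ring_scope.

(* Eigenvalues are indexed 1-based: lam n for n = 1..N. *)

Definition laplacian (R : realFieldType) (N : nat) (W : 'M[R]_N) : 'M[R]_N :=
  diag_mx (\row_k (\sum_n W k n)) - W.

Definition graph_connected (R : realFieldType) (N : nat) (W : 'M[R]_N) : Prop :=
  forall i j : 'I_N, connect (fun a b : 'I_N => 0 < W a b) i j.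

Definition lam_avg (R : realFieldType) (N : nat) (lam : nat -> R) : R :=
  (\sum_(1 <= n < N.+1) lam n) / N%:R.

Definition smooth_ratio (R : realFieldType) (N : nat) (lam : nat -> R)
  (h : R -> R) : R :=
  (lam_avg N lam)^-1 *
  ((\sum_(1 <= n < N.+1) lam n * (h (lam n)) ^+ 2) /
   (\sum_(1 <= n < N.+1) (h (lam n)) ^+ 2)).

Definition smooth_filter (R : realFieldType) (N : nat) (lam : nat -> R)
  (h : R -> R) : Prop :=
  (exists n, (1 <= n <= N)%N /\ h (lam n) != 0) /\ smooth_ratio N lam h < 1.

Definition eta_K (R : realFieldType) (N K : nat) (lam : nat -> R) (h : R -> R) : R :=
  (\big[Num.max/0]_(K.+1 <= n < N.+1) `|h (lam n)|) /
  (\big[Num.min/ `|h (lam 1%N)|]_(1 <= n < K.+1) `|h (lam n)|).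

From HB Require Import structures.
From mathcomp Require Import all_boot all_order all_algebra.
From mathcomp Require Import zify.
Set Implicit Arguments. Unset Strict Implicit. Unset Printing Implicit Defensive.
Import Order.TTheory GRing.Theory Num.Theory.
Local Open Scope ring_scope.

(* Write a for lambda_avg, d_n = lambda_n - a for the
   centred spectrum and w_n = h(lambda_n)^2 for the energy of h.  For a >= 0
   and a filter that is not identically zero, r(h) < 1 follows from the
   negativity of the centred energy  sum_n d_n w_n, and a >= 0 holds because
   N a = tr L = sum of the (nonnegative) degrees, L being orthogonally similar
   to diag(lambda).  The centred deviations vanish in sum, are <= 0 up to J and
   >= 0 after J.  Bounding w_n below by min_{n<=K} |h|^2 on the pass band
   1..K, and above by max_{n>K} |h|^2 = eta_K^2 min |h|^2 beyond K, gives
     sum_n d_n w_n <= m^2 (sum_{n<=K} d_n) - M^2 (sum_{n<=J} d_n),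
   which is negative exactly under the hypothesis on eta_K. *)

Lemma mxtrace_orthogonal_conj (R : comPzRingType) (N : nat) (V D : 'M[R]_N) :
  V *m V^T = 1%:M -> \tr (V *m D *m V^T) = \tr D.
Proof. by move=> VVT; rewrite mxtrace_mulC mulmxA (mulmx1C VVT) mul1mx. Qed.

(* The diagonal of a Laplacian with nonnegative weights holds the degrees
   minus self-loops, hence its trace is nonnegative. *)
Lemma laplacian_trace_ge0 (R : realFieldType) (N : nat) (W : 'M[R]_N) :
  (forall k n : 'I_N, 0 <= W k n) -> 0 <= \tr (laplacian W).
Proof.
move=> W_ge0; apply: sumr_ge0 => i _.
rewrite !mxE eqxx mulr1n subr_ge0 (bigD1 i) //= lerDl.
by apply: sumr_ge0 => j _.
Qed.

Lemma lam_avg_ge0 (R : realFieldType) (N : nat) (W V : 'M[R]_N)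
    (lam : nat -> R) :
  (forall k n : 'I_N, 0 <= W k n) -> V *m V^T = 1%:M ->
  laplacian W = V *m diag_mx (\row_(i < N) lam i.+1) *m V^T ->
  0 <= lam_avg N lam.
Proof.
move=> W_ge0 VVT L_spec.
have trL : \tr (laplacian W) = \sum_(1 <= n < N.+1) lam n.
  rewrite L_spec mxtrace_orthogonal_conj // mxtrace_diag big_add1 big_mkord.
  by apply: eq_bigr => i _; rewrite mxE.
by rewrite /lam_avg -trL divr_ge0 ?ler0n ?laplacian_trace_ge0.
Qed.

Lemma centred_sum_eq0 (R : realFieldType) (N : nat) (lam : nat -> R) :
  (0 < N)%N -> \sum_(1 <= n < N.+1) (lam n - lam_avg N lam) = 0.
Proof.
move=> N_gt0; rewrite sumrB sumr_const_nat subSS subn0 /lam_avg.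
by rewrite -[X in _ - X]mulr_natr mulfVK ?subrr // pnatr_eq0 -lt0n.
Qed.

Lemma smooth_ratio_lt1 (R : realFieldType) (N : nat) (lam : nat -> R)
    (h : R -> R) :
  0 <= lam_avg N lam -> 0 < \sum_(1 <= n < N.+1) h (lam n) ^+ 2 ->
  \sum_(1 <= n < N.+1) (lam n - lam_avg N lam) * h (lam n) ^+ 2 < 0 ->
  smooth_ratio N lam h < 1.
Proof.
rewrite /smooth_ratio le0r => /orP[/eqP -> _ _|a_gt0 E_gt0 centred_lt0].
  by rewrite invr0 mul0r ltr01.
rewrite mulrC ltr_pdivrMr // mul1r ltr_pdivrMr // -subr_lt0 mulr_sumr -sumrB.
by under eq_bigr => n _ do rewrite -mulrBl.
Qed.

Lemma bigmax_ge_nat (R : realFieldType) (F : nat -> R) m n i :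
  (m <= i < n)%N -> F i <= \big[Num.max/0]_(m <= j < n) F j.
Proof.
move=> /andP[mi iN]; apply: le_trans (le_bigmax_nat xpredT F mi iN).
by rewrite big_nat1_id le_max lexx.
Qed.

Lemma bigmin_le_nat (R : realFieldType) (F : nat -> R) x m n i :
  (m <= i < n)%N -> \big[Num.min/x]_(m <= j < n) F j <= F i.
Proof.
move=> /andP[mi iN]; apply: le_trans (le_bigmin_nat (x0:=x) xpredT F mi iN) _.
by rewrite big_nat1_id ge_min lexx.
Qed.

Lemma bigmin_gt0_nat (R : realFieldType) (F : nat -> R) x m n :
  0 < x -> (forall i, (m <= i < n)%N -> 0 < F i) ->
  0 < \big[Num.min/x]_(m <= j < n) F j.
Proof.
move=> x_gt0 F_gt0; rewrite big_nat_cond.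
apply: (big_ind (fun y => 0 < y)) => // [y z y0 z0|i /andP[i_range _]].
  by rewrite lt_min y0 z0.
exact: F_gt0.
Qed.

(* The combinatorial energy estimate.  d plays the centred spectrum and w the
   energy of the filter; m2 / M2 bound w on the pass / stop band. *)
Section CentredEnergy.
Variables (R : realFieldType) (N J K : nat) (d w : nat -> R) (m2 M2 : R).
Hypotheses (K_ge1 : (1 <= K)%N) (K_leJ : (K <= J)%N) (J_ltN : (J < N)%N).
Hypothesis d_low : forall n, (1 <= n <= J)%N -> d n <= 0.
Hypothesis d_high : forall n, (J < n <= N)%N -> 0 <= d n.
Hypothesis d_sum0 : \sum_(1 <= n < N.+1) d n = 0.
Hypothesis w_pass : forall n, (1 <= n <= K)%N -> m2 <= w n.
Hypothesis w_stop : forall n, (K < n <= N)%N -> 0 <= w n <= M2.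

(* Up to J the weights d are nonpositive, so only the pass band counts,
   where w is at least m2. *)
Lemma low_energy_le :
  \sum_(1 <= n < J.+1) d n * w n <= (\sum_(1 <= n < K.+1) d n) * m2.
Proof.
rewrite (@big_cat_nat _ _ _ K.+1) //= ?ltnS // -[X in _ <= X]addr0 lerD //.
  rewrite mulr_suml; apply: ler_sum_nat => n /andP[n_ge1 n_leK].
  by apply: ler_wnM2l; [apply: d_low | apply: w_pass]; lia.
rewrite big_nat_cond; apply: sumr_le0 => n /andP[/andP[n_gtK n_leJ] _].
have /andP[w_ge0 _] : 0 <= w n <= M2 by apply: w_stop; lia.
by rewrite mulr_le0_ge0 //; apply: d_low; lia.
Qed.

(* Beyond J the weights are nonnegative and w is at most M2; their total is
   minus the total up to J. *)
Lemma high_energy_le :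
  \sum_(J.+1 <= n < N.+1) d n * w n <= - (\sum_(1 <= n < J.+1) d n) * M2.
Proof.
have -> : - \sum_(1 <= n < J.+1) d n = \sum_(J.+1 <= n < N.+1) d n.
  apply/eqP; rewrite eq_sym -subr_eq0 opprK addrC -big_cat_nat ?d_sum0 //.
  by rewrite ltnW.
rewrite mulr_suml; apply: ler_sum_nat => n /andP[n_gtJ n_leN].
have /andP[_ w_le] : 0 <= w n <= M2 by apply: w_stop; lia.
by rewrite ler_wpM2l ?d_high ?n_gtJ.
Qed.

Lemma centred_energy_lt0 :
  0 < m2 -> 0 <= M2 ->
  M2 / m2 < (\sum_(1 <= n < K.+1) d n) / (\sum_(1 <= n < J.+1) d n) ->
  \sum_(1 <= n < N.+1) d n * w n < 0.
Proof.
move=> m2_gt0 M2_ge0 contrast.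
rewrite (@big_cat_nat _ _ _ J.+1) //=; last exact: ltnW.
apply: le_lt_trans (lerD low_energy_le high_energy_le) _.
set Q := \sum_(1 <= n < K.+1) d n in contrast *.
set S := \sum_(1 <= n < J.+1) d n in contrast *.
have S_le0 : S <= 0.
  rewrite /S big_nat_cond; apply: sumr_le0 => n /andP[n_low _].
  exact: d_low.
have S_lt0 : S < 0.
  rewrite lt_neqAle S_le0 andbT; apply: contraTneq contrast => ->.
  by rewrite invr0 mulr0 -leNgt divr_ge0 // ltW.
move: contrast; rewrite ltr_ndivlMr // mulrAC ltr_pdivlMr // mulNr.
by rewrite subr_lt0 (mulrC M2).
Qed.

End CentredEnergy.

Definition pass_min (R : realFieldType) (K : nat) (lam : nat -> R)
    (h : R -> R) : R :=
  \big[Num.min/ `|h (lam 1%N)|]_(1 <= n < K.+1) `|h (lam n)|.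

Definition stop_max (R : realFieldType) (N K : nat) (lam : nat -> R)
    (h : R -> R) : R :=
  \big[Num.max/0]_(K.+1 <= n < N.+1) `|h (lam n)|.

Section FilterBands.
Variables (R : realFieldType) (N K : nat) (lam : nat -> R) (h : R -> R).
Hypothesis K_ge1 : (1 <= K)%N.
Hypothesis h_pass_neq0 : forall n : nat, (1 <= n <= K)%N -> h (lam n) != 0.

Lemma eta_K_sqr :
  eta_K N K lam h ^+ 2 = stop_max N K lam h ^+ 2 / pass_min K lam h ^+ 2.
Proof. exact: expr_div_n. Qed.

Lemma pass_min_gt0 : 0 < pass_min K lam h.
Proof.
apply: bigmin_gt0_nat => [|n /andP[n_ge1 n_leK]].
  by rewrite normr_gt0 h_pass_neq0 // leqnn K_ge1.
by rewrite normr_gt0 h_pass_neq0 // n_ge1.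
Qed.

Lemma pass_energy_ge n :
  (1 <= n <= K)%N -> pass_min K lam h ^+ 2 <= h (lam n) ^+ 2.
Proof.
move=> n_pass.
have min_le :=
  @bigmin_le_nat _ (fun n => `|h (lam n)|) `|h (lam 1%N)| 1 K.+1 n n_pass.
rewrite -[h (lam n) ^+ 2](real_normK (num_real _)) ler_sqr ?nnegrE //.
exact: ltW pass_min_gt0.
Qed.

Lemma stop_energy_le n :
  (K < n <= N)%N -> 0 <= h (lam n) ^+ 2 <= stop_max N K lam h ^+ 2.
Proof.
move=> n_stop.
have n_le := @bigmax_ge_nat _ (fun n => `|h (lam n)|) K.+1 N.+1 n n_stop.
rewrite sqr_ge0 -[h (lam n) ^+ 2](real_normK (num_real _)) ler_sqr ?nnegrE //.
exact: le_trans n_le.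
Qed.

End FilterBands.

Theorem claim1 (R : realFieldType) (N : nat) (W V : 'M[R]_N) (lam : nat -> R)
  (h : R -> R) (J K : nat) :
  (2 <= N)%N ->
  W^T = W ->
  (forall k n : 'I_N, 0 <= W k n) ->
  graph_connected W ->
  V *m V^T = 1%:M ->
  laplacian W = V *m diag_mx (\row_(i < N) lam i.+1) *m V^T ->
  (forall m n : nat, (1 <= m)%N -> (m <= n)%N -> (n <= N)%N -> lam m <= lam n) ->
  (1 <= J <= N.-1)%N ->
  lam J <= lam_avg N lam < lam J.+1 ->
  (1 <= K <= J)%N ->
  (forall n : nat, (1 <= n <= K)%N -> h (lam n) != 0) ->
  (eta_K N K lam h) ^+ 2 <
    (\sum_(1 <= n < K.+1) (lam n - lam_avg N lam)) /
    (\sum_(1 <= n < J.+1) (lam n - lam_avg N lam)) ->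
  smooth_filter N lam h.
Proof.
move=> N_ge2 _ W_ge0 _ VVT L_spec lam_mono /andP[J_ge1 J_le] /andP[lamJ_le lamJ1_gt]
  /andP[K_ge1 K_leJ] h_pass_neq0 eta_bound.
have J_ltN : (J < N)%N by lia.
have h1_neq0 : h (lam 1%N) != 0 by rewrite h_pass_neq0 // leqnn K_ge1.
split; first by exists 1%N; split; first by lia.
have energy_gt0 : 0 < \sum_(1 <= n < N.+1) h (lam n) ^+ 2.
  rewrite big_ltn ?ltnS ?(leq_trans _ N_ge2) // ltr_pwDl ?exprn_even_gt0 //.
  by apply: sumr_ge0 => n _; apply: sqr_ge0.
have dev_low n : (1 <= n <= J)%N -> lam n - lam_avg N lam <= 0.
  by move=> n_low; rewrite subr_le0 (le_trans _ lamJ_le) //; apply: lam_mono; lia.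
have dev_high n : (J < n <= N)%N -> 0 <= lam n - lam_avg N lam.
  move=> n_high; rewrite subr_ge0 ltW // (lt_le_trans lamJ1_gt) //.
  by apply: lam_mono; lia.
apply: smooth_ratio_lt1 (lam_avg_ge0 W_ge0 VVT L_spec) energy_gt0 _.
apply: (centred_energy_lt0 K_ge1 K_leJ J_ltN dev_low dev_high)
  (pass_energy_ge K_ge1 h_pass_neq0) (stop_energy_le lam h) _ (sqr_ge0 _) _.
- by apply: centred_sum_eq0; lia.
- exact: exprn_gt0 (pass_min_gt0 K_ge1 h_pass_neq0).
- by rewrite -eta_K_sqr.
Qed.
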